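(* Let $L:\mathbb{R}^n\to\mathbb{R}$ be $\mathcal{C}^1$, convex, with a unique minimizer $z_1^*$ ($L^*=L(z_1^* )$), and with $\nabla L$ Lipschitz with constant $M>0$. Let $\zeta>0$, $\bar d(t)=\frac{3}{2(t+2)}$, $\bar\beta(t)=\frac{t-1}{t+2}$, $\bar a(\tau)=\frac{2}{\tau+2}$, and $$V_1(z,\tau):=\tfrac12|\bar a(\tau)(z_1-z_1^* )+z_2|^2+\tfrac{\zeta^2}{M}(L(z_1)-L^* ).$$ Then each maximal solution $t\mapsto(z(t),\tau(t))$ of the system $\dot z_1=z_2$, $\dot z_2=-2\bar d(\tau)z_2-\frac{\zeta^2}{M}\nabla L(z_1+\bar\beta(\tau)z_2)$, $\dot\tau=1$ on $\mathbb{R}^{2n}\times\mathbb{R}_{\ge0}$ with $\tau(0)=0$ satisfies $$V_1(z(t),t)\le\frac{9}{(t+2)^2}V_1(z(1),1)\quad\text{for all }t\ge1.$$ *)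

From HB Require Import structures.
From mathcomp Require Import all_boot all_order all_algebra.
From mathcomp Require Import all_classical all_reals all_analysis.
Set Implicit Arguments. Unset Strict Implicit. Unset Printing Implicit Defensive.
Import Order.TTheory GRing.Theory Num.Theory.
Import numFieldNormedType.Exports.
Local Open Scope ring_scope.

(* Euclidean inner product, squared norm and norm on R^n = 'rV[R]_n
   (the library's norm on matrices is the sup norm, so we fix the
   Euclidean one explicitly). *)
Definition dotv {R : realType} {n : nat} (u v : 'rV[R]_n) : R :=
  \sum_(i < n) u 0 i * v 0 i.
Definition sqnorm {R : realType} {n : nat} (u : 'rV[R]_n) : R := dotv u u.
Definition enorm {R : realType} {n : nat} (u : 'rV[R]_n) : R := Num.sqrt (sqnorm u).

Definition convex_fun {R : realType} {n : nat} (L : 'rV[R]_n -> R) : Prop :=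
  forall (x y : 'rV[R]_n) (s : R), 0 <= s -> s <= 1 ->
    L ((1 - s) *: x + s *: y) <= (1 - s) * L x + s * L y.

Definition unique_minimizer {R : realType} {n : nat} (L : 'rV[R]_n -> R)
  (z : 'rV[R]_n) : Prop :=
  (forall x, L z <= L x) /\ (forall x, (forall y, L x <= L y) -> x = z).

Definition has_gradient {R : realType} {n : nat} (L : 'rV[R]_n -> R)
  (gradL : 'rV[R]_n -> 'rV[R]_n) : Prop :=
  forall x, differentiable L x /\ forall v, 'd L x v = dotv (gradL x) v.

Definition dbar {R : realType} (t : R) : R := 3 / (2 * (t + 2)).
Definition betabar {R : realType} (t : R) : R := (t - 1) / (t + 2).
Definition abar {R : realType} (t : R) : R := 2 / (t + 2).

Definition V1 {R : realType} {n : nat} (L : 'rV[R]_n -> R) (M zeta : R)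
  (zs : 'rV[R]_n) (z1 z2 : 'rV[R]_n) (tau : R) : R :=
  2^-1 * sqnorm (abar tau *: (z1 - zs) + z2) + zeta ^+ 2 / M * (L z1 - L zs).

From HB Require Import structures.
From mathcomp Require Import all_boot all_order all_algebra.
From mathcomp Require Import all_classical all_reals all_analysis.
From mathcomp Require Import ring lra.
Import Order.TTheory GRing.Theory Num.Theory.
Import numFieldNormedType.Exports.
Local Open Scope classical_set_scope.
Local Open Scope ring_scope.

(* The function (t + 2)^2 V1(z(t), t) is nonincreasing on [1, +oo).  Write
   c = zeta^2 / M, w = abar(t) (z1 - zs) + z2 and y = z1 + betabar(t) z2.
   The ODE gives w' = - (abar / 2) w - c grad L(y), so the |w|^2 terms cancel
   in the derivative of (t + 2)^2 V1, which is
     c (t + 2) [2 (L z1 - L zs) - 2 <grad L(y), z1 - zs>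
                - (t + 2) <grad L(y) - grad L(z1), z2>].
   Two first-order convexity inequalities bound the first two terms by
   2 betabar <grad L(y) - grad L(z1), z2>, this inner product is nonnegative
   by monotonicity of the gradient, and 2 betabar <= t + 2. *)

Lemma is_derive_mxP {R : realFieldType} {V : normedModType R} {m n : nat}
    (M : V -> 'M[R]_(m, n)) (x v : V) (D : 'M[R]_(m, n)) :
  is_derive x v M D <-> forall i j, is_derive x v (fun y => M y i j) (D i j).
Proof.
split=> [dM i j | dMij].
- case: dM => dMxv <-.
  apply: DeriveDef; first exact: (derivable_mxP M x v).1 dMxv i j.
  by rewrite derive_mx // mxE.
- have dM : derivable M x v by apply/derivable_mxP => i j; case: (dMij i j).
  apply: DeriveDef => //; rewrite derive_mx //; apply/matrixP => i j.
  by rewrite mxE derive_val.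
Qed.

Section euclidean_inner_product.
Context {R : realType} {n : nat}.
Implicit Types u v w : 'rV[R]_n.

Lemma dotvC u v : dotv u v = dotv v u.
Proof. by apply: eq_bigr => i _; rewrite mulrC. Qed.

Lemma dotvDl u v w : dotv (u + v) w = dotv u w + dotv v w.
Proof. by rewrite /dotv -big_split; apply: eq_bigr => i _; rewrite mxE mulrDl. Qed.

Lemma dotvZl a u v : dotv (a *: u) v = a * dotv u v.
Proof. by rewrite /dotv mulr_sumr; apply: eq_bigr => i _; rewrite mxE mulrA. Qed.

Lemma dotvNl u v : dotv (- u) v = - dotv u v.
Proof. by rewrite -scaleN1r dotvZl mulN1r. Qed.

Lemma dotvBl u v w : dotv (u - v) w = dotv u w - dotv v w.
Proof. by rewrite dotvDl dotvNl. Qed.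

Lemma dotvDr u v w : dotv u (v + w) = dotv u v + dotv u w.
Proof. by rewrite dotvC dotvDl !(dotvC u). Qed.

Lemma dotvZr a u v : dotv u (a *: v) = a * dotv u v.
Proof. by rewrite dotvC dotvZl dotvC. Qed.

Lemma dotvNr u v : dotv u (- v) = - dotv u v.
Proof. by rewrite dotvC dotvNl dotvC. Qed.

Context {V : normedModType R}.

Lemma is_derive_dotv {f g : V -> 'rV[R]_n} {x v : V} {df dg : 'rV[R]_n} :
  is_derive x v f df -> is_derive x v g dg ->
  is_derive x v (fun y => dotv (f y) (g y)) (dotv df (g x) + dotv (f x) dg).
Proof.
move=> /is_derive_mxP /(_ 0) dfi /is_derive_mxP /(_ 0) dgi.
move: (is_derive_sum (fun i => is_deriveM (dfi i) (dgi i))).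
rewrite fct_sumE /dotv => /is_derive_eq; apply.
rewrite -big_split; apply: eq_bigr => i _ /=.
by rewrite addrC [df 0 i * _]mulrC.
Qed.

Lemma is_derive_scale {k : V -> R} {f : V -> 'rV[R]_n} {x v : V} {dk : R}
    {df : 'rV[R]_n} :
  is_derive x v k dk -> is_derive x v f df ->
  is_derive x v (fun y => k y *: f y) (k x *: df + dk *: f x).
Proof.
move=> dk_ /is_derive_mxP dfij; apply/is_derive_mxP => i j.
have -> : (fun y => (k y *: f y) i j) = k * (fun y => f y i j).
  by apply/funext => y; rewrite mxE.
apply: is_derive_eq (is_deriveM dk_ (dfij i j)) _.
by rewrite !mxE [f x i j *: _]mulrC.
Qed.

End euclidean_inner_product.

Section gradient.
Context {R : realType} {n : nat} {L : 'rV[R]_n -> R} {gradL : 'rV[R]_n -> 'rV[R]_n}.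
Hypotheses (hgrad : has_gradient L gradL) (hconv : convex_fun L).

Lemma is_derive_gradient_comp {z : R -> 'rV[R]_n} {t : R} {dz : 'rV[R]_n} :
  is_derive t 1 z dz -> is_derive t 1 (L \o z) (dotv (gradL (z t)) dz).
Proof.
move=> [dz1 dzE]; have [dL dLE] := hgrad (z t).
have dz_diff : differentiable z t by apply/derivable1_diffP.
have dLz : differentiable (L \o z) t by apply: differentiable_comp.
apply: DeriveDef; first exact/derivable1_diffP.
by rewrite deriveE // diff_comp //= dLE -[X in dotv _ X]deriveE // dzE.
Qed.

Lemma convex_gradient_ineq x y : L y + dotv (gradL y) (x - y) <= L x.
Proof.
have [dL dLE] := hgrad y; set v := x - y.
have dv : derivable L y v by apply: diff_derivable.
rewrite -(dLE v) -deriveE //.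
set q := fun h : R => h^-1 *: ((L \o shift y) (h *: v) - L y).
have q_right : q @ at_right 0 --> 'D_v L y.
  move=> A /dv /nbhs_ballP [_ /posnumP[e] xe_A].
  by exists e%:num => //= h xe_h /gt_eqF/negbT/xe_A; exact.
suff : 'D_v L y <= L x - L y by lra.
apply: (cvgr_to_le q_right); near=> h.
have h0 : 0 < h by near: h; exact: nbhs_right_gt.
have h1 : h <= 1 by near: h; apply: nbhs_right_le; exact: ltr01.
have -> : q h = (L ((1 - h) *: y + h *: x) - L y) / h.
  rewrite /q /= /shift (_ : h *: v + y = (1 - h) *: y + h *: x); first exact: mulrC.
  by apply/rowP => j; rewrite /v !mxE; ring.
rewrite ler_pdivrMr //; have := hconv y x h (ltW h0) h1; nra.
Unshelve. all: by end_near.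
Qed.

Lemma gradient_monotone x y : 0 <= dotv (gradL x - gradL y) (x - y).
Proof.
have := convex_gradient_ineq x y; have := convex_gradient_ineq y x.
rewrite dotvBl -[y - x]opprB dotvNr; lra.
Qed.

Lemma convex_gap_le x z v b :
  L x - L z <= dotv (gradL (x + b *: v)) (x - z)
               + b * dotv (gradL (x + b *: v) - gradL x) v.
Proof.
set y := x + b *: v.
have := convex_gradient_ineq z y; have := convex_gradient_ineq y x.
have -> : z - y = - ((x - z) + b *: v).
  by apply/rowP => j; rewrite /y !mxE; ring.
have -> : y - x = b *: v by rewrite /y addrAC subrr add0r.
rewrite dotvNr dotvDr !dotvZr dotvBl mulrBr; lra.
Qed.

Lemma gradient_step_ge0 x v b :
  0 < b -> 0 <= dotv (gradL (x + b *: v) - gradL x) v.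
Proof.
move=> b0; have := gradient_monotone (x + b *: v) x.
by rewrite addrAC subrr add0r dotvZr pmulr_rge0.
Qed.

End gradient.

Lemma is_derive_abar {R : realType} (t : R) :
  t + 2 != 0 -> is_derive t 1 (@abar R) (- (2 / (t + 2) ^+ 2)).
Proof.
move=> t2.
move: (is_deriveZ (2 : R) (@is_deriveV R (shift 2) t 1 1 t2 (is_derive_shift t 1 2))).
move=> /is_derive_eq; apply.
change (2 * (- (t + 2) ^- 2 * 1) = - (2 / (t + 2) ^+ 2)).
by rewrite mulr1 mulrN.
Qed.

Lemma is_derive_le0_nonincreasing {R : realType} (f df : R -> R) (a b : R) :
  a <= b -> {in `[a, b], forall x : R, is_derive x 1 f (df x)} ->
  {in `]a, b[, forall x, df x <= 0} -> f b <= f a.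
Proof.
move=> ab fdf df_le0.
have fab x : x \in `]a, b[ -> x \in `[a, b] by apply: subset_itv_oo_cc.
have aab : a \in `[a, b] by rewrite in_itv /= lexx ab.
have bab : b \in `[a, b] by rewrite in_itv /= lexx ab.
apply: (ler0_derive1_le_cc _ _ _ bab aab ab).
- by move=> x /fab /fdf [].
- by move=> x xab; rewrite derive1E; have [_ ->] := fdf x (fab x xab); exact: df_le0.
- by apply: derivable_within_continuous => x /fdf [].
Qed.

Definition scaled_V1 {R : realType} {n : nat} (L : 'rV[R]_n -> R) (M zeta : R)
    (zs : 'rV[R]_n) (z1 z2 : R -> 'rV[R]_n) (t : R) : R :=
  (t + 2) ^+ 2 * V1 L M zeta zs (z1 t) (z2 t) t.

Section lyapunov.
Context {R : realType} {n : nat} {L : 'rV[R]_n -> R} {gradL : 'rV[R]_n -> 'rV[R]_n}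
  {zs : 'rV[R]_n} {M zeta : R} {z1 z2 : R -> 'rV[R]_n}.
Hypotheses (hgrad : has_gradient L gradL) (hconv : convex_fun L) (hM : 0 < M).
Hypothesis hode1 : forall t : R, 0 < t -> is_derive t 1 z1 (z2 t).
Hypothesis hode2 : forall t : R, 0 < t -> is_derive t 1 z2
  (- (2 * dbar t) *: z2 t - (zeta ^+ 2 / M) *: gradL (z1 t + betabar t *: z2 t)).

Let c := zeta ^+ 2 / M.
Let w t := abar t *: (z1 t - zs) + z2 t.
Let g t := gradL (z1 t + betabar t *: z2 t).

Lemma is_derive_w (t : R) :
  0 < t -> is_derive t 1 w (- (abar t / 2) *: w t - c *: g t).
Proof.
move=> t0; have t2 : t + 2 != 0 by rewrite lt0r_neq0 // addr_gt0.
have he : is_derive t 1 (fun s => z1 s - zs) (z2 t).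
  by have := is_deriveB (hode1 t t0) (is_derive_cst zs t 1); rewrite subr0.
move: (is_deriveD (is_derive_scale (is_derive_abar t t2) he) (hode2 t t0)).
move=> /is_derive_eq; apply.
apply/rowP => j; rewrite /w /c /g !mxE /abar /dbar; field.
by rewrite lt0r_neq0.
Qed.

Let scaled_V1' t :=
  c * (t + 2) * (2 * (L (z1 t) - L zs) - 2 * dotv (g t) (z1 t - zs)
                 - (t + 2) * dotv (g t - gradL (z1 t)) (z2 t)).

Lemma is_derive_scaled_V1 (t : R) : 0 < t ->
  is_derive t 1 (scaled_V1 L M zeta zs z1 z2) (scaled_V1' t).
Proof.
move=> t0; have t2 : t + 2 != 0 by rewrite lt0r_neq0 // addr_gt0.
have hw := is_derive_w t t0.
set dw := - (abar t / 2) *: w t - c *: g t.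
set G1 := dotv (gradL (z1 t)) (z2 t).
have hV : is_derive t 1 (fun s => V1 L M zeta zs (z1 s) (z2 s) s)
                   (dotv (w t) dw + c * G1).
  have hL := is_derive_gradient_comp hgrad (hode1 t t0).
  move: (is_deriveD (is_deriveZ 2^-1 (is_derive_dotv hw hw))
                    (is_deriveZ c (is_deriveB hL (is_derive_cst (L zs) t 1)))).
  move=> /is_derive_eq; apply; rewrite [dotv dw _]dotvC subr0.
  change (2^-1 * (dotv (w t) dw + dotv (w t) dw) + c * G1 = dotv (w t) dw + c * G1).
  lra.
have hT : is_derive t 1 (fun s : R => (s + 2) ^+ 2) (2 * (t + 2)).
  move: (is_deriveX 2 (is_derive_shift t 1 (2 : R))) => /is_derive_eq; apply.
  by change (2 * (t + 2) * 1 = 2 * (t + 2)); rewrite mulr1.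
move: (is_deriveM hT hV) => /is_derive_eq; apply.
rewrite -[LHS]/((t + 2) ^+ 2 * (dotv (w t) dw + c * G1)
                 + V1 L M zeta zs (z1 t) (z2 t) t * (2 * (t + 2))).
have dwE : dotv (w t) dw = - (abar t / 2) * dotv (w t) (w t) - c * dotv (w t) (g t).
  by rewrite /dw dotvDr dotvNr !dotvZr.
have gw : dotv (w t) (g t) = abar t * dotv (g t) (z1 t - zs) + dotv (g t) (z2 t).
  by rewrite /w /= dotvDl dotvZl !(dotvC (g t)).
rewrite /scaled_V1' /V1 /sqnorm -/c -/(w t) dwE gw dotvBl -/G1 /abar.
by field.
Qed.

Lemma scaled_V1'_le0 (t : R) : 1 < t -> scaled_V1' t <= 0.
Proof.
move=> t1; have t0 : 0 < t + 2 by rewrite addr_gt0 // (lt_trans ltr01 t1).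
have b0 : 0 < betabar t by rewrite divr_gt0 // subr_gt0.
have b2 : 2 * betabar t <= t + 2 by rewrite /betabar mulrA ler_pdivrMr //; nra.
have := convex_gap_le hgrad hconv (z1 t) zs (z2 t) (betabar t).
have := gradient_step_ge0 hgrad hconv (z1 t) (z2 t) (betabar t) b0.
rewrite /scaled_V1' -/(g t) => D0 gap.
have c0 : 0 <= c by rewrite divr_ge0 ?sqr_ge0 ?ltW.
apply: mulr_ge0_le0; first by rewrite mulr_ge0 // ltW.
nra.
Qed.

Lemma scaled_V1_nonincreasing (a b : R) : 1 <= a -> a <= b ->
  scaled_V1 L M zeta zs z1 z2 b <= scaled_V1 L M zeta zs z1 z2 a.
Proof.
move=> a1 ab; apply: (is_derive_le0_nonincreasing _ scaled_V1' _ _ ab) => x.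
- rewrite in_itv /= => /andP[ax _]; apply: is_derive_scaled_V1.
  exact: lt_le_trans ltr01 (le_trans a1 ax).
- by rewrite in_itv /= => /andP[ax _]; apply: scaled_V1'_le0; exact: le_lt_trans a1 ax.
Qed.

End lyapunov.

Theorem proposition5p4 (R : realType) (n : nat) (L : 'rV[R]_n -> R)
  (gradL : 'rV[R]_n -> 'rV[R]_n) (zs : 'rV[R]_n) (M zeta : R)
  (hgrad : has_gradient L gradL)
  (hcont : continuous gradL)
  (hconv : convex_fun L)
  (hmin : unique_minimizer L zs)
  (hM : 0 < M)
  (hLip : forall x y, enorm (gradL x - gradL y) <= M * enorm (x - y))
  (hzeta : 0 < zeta)
  (z1 z2 : R -> 'rV[R]_n)
  (hcont0 : {within [set t : R | 0 <= t], continuous z1} /\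
            {within [set t : R | 0 <= t], continuous z2})
  (hode1 : forall t : R, 0 < t -> is_derive t 1 z1 (z2 t))
  (hode2 : forall t : R, 0 < t ->
     is_derive t 1 z2 (- (2 * dbar t) *: z2 t
                       - (zeta ^+ 2 / M) *: gradL (z1 t + betabar t *: z2 t))) :
  forall t : R, 1 <= t ->
    V1 L M zeta zs (z1 t) (z2 t) t
      <= 9 / (t + 2) ^+ 2 * V1 L M zeta zs (z1 1) (z2 1) 1.
Proof.
move=> t t1.
have decay : scaled_V1 L M zeta zs z1 z2 t <= scaled_V1 L M zeta zs z1 z2 1.
  exact: scaled_V1_nonincreasing hgrad hconv hM hode1 hode2 1 t (lexx 1) t1.
have t2 : 0 < (t + 2) ^+ 2 by rewrite exprn_gt0 // addr_gt0 // (lt_le_trans ltr01 t1).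
rewrite mulrAC ler_pdivlMr // mulrC.
have -> : (9 : R) = (1 + 2) ^+ 2 by ring.
exact: decay.
Qed.
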